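(* Let $X$ be a simple chain. (1) If $X$ is rigid, then the group $(\mathrm{Aut}(X),\tau_p)$, and hence also $(\mathrm{Aut}(X),\tau_\partial)$, is not Roelcke precompact. (2) If $X$ is ultrahomogeneous, then the group $(\mathrm{Aut}(X),\tau_\partial)$, and hence also $(\mathrm{Aut}(X),\tau_p)$, is Roelcke precompact.
   Context: A chain is a linearly ordered set; $\mathrm{Aut}(X)$ is its group of order-preserving bijections. $X$ is homogeneous if $\mathrm{Aut}(X)$ acts transitively. An interval is a convex subset. An interval $J$ is regular if for all $x,y\in J$ and $g\in\mathrm{Aut}(X)$, $g(x)\in J$ implies $g(y)\in J$. A homogeneous chain is simple if it has no proper regular intervals (i.e. the only nonempty regular intervals are singletons and $X$). A homogeneous chain is rigid if for any $x,y\in X$ there is exactly one $g\in\mathrm{Aut}(X)$ with $g(x)=y$. $X$ is ultrahomogeneous if for every $n$ and all $x_1<\dots<x_n$, $y_1<\dots<y_n$ in $X$ there is $g\in\mathrm{Aut}(X)$ with $g(x_k)=y_k$. $\tau_p$ is the topology of pointwise convergence on $\mathrm{Aut}(X)$ where $X$ carries the linear order topology; $\tau_\partial$ is the permutation topology, whose identity neighbourhood base consists of pointwise stabilizers of finite subsets of $X$. A topological group is Roelcke precompact if its Roelcke uniformity (the greatest lower bound of the left and right uniformities) is totally bounded. *)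

From mathcomp Require Import all_boot all_order.
Set Implicit Arguments. Unset Strict Implicit. Unset Printing Implicit Defensive.
Import Order.TTheory.
Local Open Scope order_scope.

Section Chains.
Context {d : Order.disp_t} (X : orderType d).

Definition is_aut (g : X -> X) : Prop :=
  bijective g /\ (forall x y : X, x < y -> g x < g y).

Definition homogeneous : Prop :=
  forall x y : X, exists g, is_aut g /\ g x = y.

Definition is_interval (J : X -> Prop) : Prop :=
  forall x y z : X, J x -> J z -> x <= y -> y <= z -> J y.

Definition regular_interval (J : X -> Prop) : Prop :=
  is_interval J /\
  forall (x y : X) (g : X -> X), J x -> J y -> is_aut g -> J (g x) -> J (g y).

Definition simple_chain : Prop :=
  homogeneous /\
  forall J : X -> Prop, regular_interval J -> (exists x, J x) ->
    (exists x, forall y, J y <-> y = x) \/ (forall y, J y).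

Definition rigid : Prop :=
  homogeneous /\
  forall x y : X, exists g, is_aut g /\ g x = y /\
    forall h, is_aut h -> h x = y -> forall z, h z = g z.

Definition ultrahomogeneous : Prop :=
  forall (n : nat) (xs ys : 'I_n -> X),
    (forall i j : 'I_n, (i < j)%N -> xs i < xs j) ->
    (forall i j : 'I_n, (i < j)%N -> ys i < ys j) ->
    exists g, is_aut g /\ forall k, g (xs k) = ys k.

(* Linear order topology on X: basic open sets are X, open rays and open
   intervals; [obasic oa ob] = {y | a < y (if oa = Some a) and y < b (if ob = Some b)}. *)
Definition obasic (oa ob : option X) (y : X) : Prop :=
  (match oa with Some a => a < y | None => True end) /\
  (match ob with Some b => y < b | None => True end).

Definition order_open (O : X -> Prop) : Prop :=
  forall x, O x -> exists oa ob, obasic oa ob x /\ forall y, obasic oa ob y -> O y.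

(* Neighbourhoods of the identity in (Aut(X), tau_p), the topology of pointwise
   convergence (X with the order topology): U contains a finite intersection of
   subbasic open sets {g | g x_i \in O_i} containing id (i.e. x_i \in O_i). *)
Definition tau_p_nbhd (U : (X -> X) -> Prop) : Prop :=
  exists (n : nat) (pts : 'I_n -> X) (O : 'I_n -> X -> Prop),
    (forall i, order_open (O i) /\ O i (pts i)) /\
    forall g, is_aut g -> (forall i, O i (g (pts i))) -> U g.

(* Neighbourhoods of the identity in (Aut(X), tau_partial), the permutation
   topology: U contains the pointwise stabilizer of a finite subset of X. *)
Definition tau_partial_nbhd (U : (X -> X) -> Prop) : Prop :=
  exists (n : nat) (pts : 'I_n -> X),
    forall g, is_aut g -> (forall i, g (pts i) = pts i) -> U g.

(* Roelcke precompactness of Aut(X) with the group topology whose identity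
   neighbourhoods are given by [nbhd]: the Roelcke uniformity has as a base the
   entourages {(g,h) | h \in U g U}, U an identity neighbourhood; total
   boundedness means that for every such U there is a finite F \subseteq Aut(X)
   with Aut(X) = U F U. *)
Definition roelcke_precompact (nbhd : ((X -> X) -> Prop) -> Prop) : Prop :=
  forall U, nbhd U ->
    exists (n : nat) (F : 'I_n -> X -> X),
      (forall i, is_aut (F i)) /\
      forall g, is_aut g ->
        exists i u v, is_aut u /\ is_aut v /\ U u /\ U v /\
          forall z, g z = u (F i (v z)).

End Chains.

(* (1) In a rigid chain two automorphisms that compare one way at a single
   point compare that way everywhere: otherwise their pointwise maximum is an
   automorphism agreeing with each of them at some point.  Hence for h > id the
   identity neighbourhood U = {g | g x < h x} consists of maps below h, every
   element u f v of U F U with F finite satisfies u f v x < h (f (h x)), and so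
   sends x below a bound depending only on F; by homogeneity some automorphism
   sends x above that bound.
   (2) If V is the stabilizer of a finite set P, then by ultrahomogeneity V g V
   is determined by the relative position of g(P) and P, and there are only
   finitely many such positions; one representative per position gives F. *)
From Stdlib Require Import Classical.
From mathcomp Require Import all_boot all_order.
Set Implicit Arguments. Unset Strict Implicit. Unset Printing Implicit Defensive.
Import Order.TTheory.
Local Open Scope order_scope.

Lemma fin_image_section (A : Type) (P : A -> Prop) (a0 : A) (T : finType)
    (f : A -> T) :
  P a0 -> exists F : T -> A, (forall t, P (F t)) /\ forall a, P a -> f (F (f a)) = f a.
Proof.
move=> Pa0.
have pick_t t : exists a, P a /\ ((exists2 a', P a' & f a' = t) -> f a = t).
  have [[a' Pa' fa't] | no_t] := classic (exists2 a', P a' & f a' = t).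
  - by exists a'.
  - by exists a0; split=> // /no_t.
have [F FP] := fin_all_exists pick_t.
by exists F; split=> [t | a Pa]; [case: (FP t) | apply: (proj2 (FP (f a))); exists a].
Qed.

Section Automorphisms.
Context {d : Order.disp_t} (X : orderType d).
Implicit Types (f g h u v : X -> X) (x y z : X).

Lemma aut_lt_mono f : is_aut f -> {mono f : x y / x < y}.
Proof.
move=> [_ f_lt] x y; case: (ltgtP x y) => [/f_lt // | yx | -> ]; last exact: ltxx.
by apply/negbTE; rewrite -leNgt ltW // f_lt.
Qed.

Lemma aut_le_mono f : is_aut f -> {mono f : x y / x <= y}.
Proof. by move=> f_aut x y; rewrite !leNgt aut_lt_mono. Qed.

Lemma aut_id : is_aut (@id X).
Proof. by split=> //; exists id. Qed.

Lemma aut_comp f g : is_aut f -> is_aut g -> is_aut (f \o g).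
Proof.
move=> [f_bij f_lt] [g_bij g_lt]; split; first exact: bij_comp.
by move=> x y /g_lt /f_lt.
Qed.

Lemma aut_inv f : is_aut f -> exists f', [/\ is_aut f', cancel f f' & cancel f' f].
Proof.
move=> f_aut; have [[f' fK f'K] _] := f_aut; exists f'; split=> //.
by split; [exists f | move=> x y xy; rewrite -(aut_lt_mono f_aut) !f'K].
Qed.

Lemma aut_max f g : is_aut f -> is_aut g -> is_aut (fun z => Order.max (f z) (g z)).
Proof.
move=> f_aut g_aut.
have max_lt x y : x < y -> Order.max (f x) (g x) < Order.max (f y) (g y).
  by move=> xy; rewrite gt_max !lt_max !aut_lt_mono // xy orbT.
split=> //.
have [f' [_ fK f'K]] := aut_inv f_aut; have [g' [_ gK g'K]] := aut_inv g_aut.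
have max_minK : cancel (fun z => Order.min (f' z) (g' z))
                       (fun z => Order.max (f z) (g z)).
  move=> z; case: (leP (f' z) (g' z)) => f'g'.
  - by rewrite f'K; apply/max_idPl; rewrite -{2}(g'K z) aut_le_mono.
  - by rewrite g'K; apply/max_idPr; rewrite -{2}(f'K z) aut_le_mono // ltW.
have max_inj : injective (fun z => Order.max (f z) (g z)).
  by move=> x y fgxy; case: (ltgtP x y) => // /max_lt; rewrite fgxy ltxx.
by exists (fun z => Order.min (f' z) (g' z)) => //; apply: inj_can_sym.
Qed.

Lemma finite_family_bounded (x0 : X) n (xs : 'I_n -> X) :
  exists M, forall i, xs i <= M.
Proof.
suff [M ubM] : exists M, forall y, y \in [seq xs i | i <- enum 'I_n] -> y <= M.
  by exists M => i; apply/ubM/map_f; rewrite mem_enum.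
elim: [seq xs i | i <- _] => [|a s [M ubM]]; first by exists x0.
exists (Order.max a M) => y; rewrite inE le_max => /predU1P [-> | /ubM ->].
  by rewrite lexx.
by rewrite orbT.
Qed.

Lemma increasing_enumeration (x0 : X) m (xs : 'I_m -> X) :
  exists N (zs : 'I_N -> X), [/\ forall k l : 'I_N, (k < l)%N -> zs k < zs l,
    forall i, exists k, zs k = xs i & forall k, exists i, xs i = zs k].
Proof.
pose s := sort <=%O (undup [seq xs i | i <- enum 'I_m]).
have s_sorted : sorted <%O s by rewrite sort_lt_sorted undup_uniq.
have mem_s y : (y \in s) = (y \in [seq xs i | i <- enum 'I_m]).
  by rewrite mem_sort mem_undup.
exists (size s), (fun k => nth x0 s k); split.
- by move=> k l kl; rewrite lt_sorted_ltn_nth // inE ltn_ord.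
- move=> i; have : xs i \in s by rewrite mem_s map_f // mem_enum.
  by rewrite -index_mem => s_i; exists (Ordinal s_i); rewrite nth_index // -index_mem.
- move=> k; have : nth x0 s k \in s by rewrite mem_nth.
  by rewrite mem_s => /mapP [i _ ->]; exists i.
Qed.

Lemma tau_partial_of_tau_p_nbhd U : tau_p_nbhd (X:=X) U -> tau_partial_nbhd (X:=X) U.
Proof.
move=> [n [pts [O [O_pts sub_U]]]]; exists n, pts => g g_aut g_fix.
by apply: sub_U => // i; rewrite g_fix; case: (O_pts i).
Qed.

Lemma roelcke_precompact_tau_p :
  roelcke_precompact (@tau_partial_nbhd d X) -> roelcke_precompact (@tau_p_nbhd d X).
Proof. by move=> rp U /tau_partial_of_tau_p_nbhd; apply: rp. Qed.

End Automorphisms.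

Section Rigid.
Context {d : Order.disp_t} (X : orderType d).
Implicit Types (f g h u v : X -> X) (x y z : X).
Hypothesis X_rigid : rigid X.

Lemma rigid_aut_eq f g x : is_aut f -> is_aut g -> f x = g x -> f =1 g.
Proof.
move=> f_aut g_aut fgx z; have [k [_ [_ k_uniq]]] := X_rigid.2 x (f x).
by rewrite (k_uniq f) // (k_uniq g).
Qed.

Lemma rigid_aut_lt f g x : is_aut f -> is_aut g -> f x < g x -> forall y, f y < g y.
Proof.
move=> f_aut g_aut fgx y; case: (ltgtP (f y) (g y)) => // [gfy | fgy].
- have max_f : Order.max (f y) (g y) = f y by rewrite max_l // ltW.
  have := rigid_aut_eq (aut_max f_aut g_aut) f_aut max_f x.
  by rewrite max_r ?ltW // => gfx; move: fgx; rewrite -gfx ltxx.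
- by move: fgx; rewrite (rigid_aut_eq f_aut g_aut fgy) ltxx.
Qed.

Lemma rigid_aut_increasing :
  (exists x y : X, x <> y) -> exists h, is_aut h /\ forall z, z < h z.
Proof.
move=> [x [y x_neq_y]].
have [x1 [y1 x1y1]] : exists x1 y1 : X, x1 < y1.
  by case: (ltgtP x y) => [xy | yx | //]; [exists x, y | exists y, x].
have [h [h_aut hx1]] := X_rigid.1 x1 y1.
have id_below_h := rigid_aut_lt (@aut_id _ X) h_aut (x := x1).
by exists h; split=> //; apply: id_below_h; rewrite hx1.
Qed.

Lemma rigid_not_roelcke_precompact :
  (exists x y : X, x <> y) -> ~ roelcke_precompact (@tau_p_nbhd d X).
Proof.
move=> two_points rp; have [x _] := two_points.
have [h [h_aut h_up]] := rigid_aut_increasing two_points.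
pose U g := g x < h x.
have U_nbhd : tau_p_nbhd (X:=X) U.
  exists 1%N, (fun=> x), (fun=> obasic None (Some (h x))); split.
    by move=> _; split; [move=> z Oz; exists None, (Some (h x)) | split].
  by move=> g _ /(_ ord0) [].
have [n [F [F_aut UFU]]] := rp U U_nbhd.
have [M ubM] := finite_family_bounded x (fun i => h (F i (h x))).
have [g [g_aut gx]] := X_rigid.1 x (h M).
have [i [u [v [u_aut [v_aut [Uu [Uv g_uFv]]]]]]] := UFU g g_aut.
suff : g x < h M by rewrite gx ltxx.
have u_below_h : u (F i (v x)) < h (F i (v x))
  by apply: rigid_aut_lt u_aut h_aut Uu _.
rewrite g_uFv (lt_trans u_below_h) // (lt_trans _ (h_up M)) //.
by apply: lt_le_trans (ubM i); rewrite !aut_lt_mono.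
Qed.

End Rigid.

Section Ultrahomogeneous.
Context {d : Order.disp_t} (X : orderType d).
Implicit Types (f g h u v : X -> X) (x y z : X).
Hypothesis X_uh : ultrahomogeneous X.

Lemma ultrahomogeneous_tuple (x0 : X) m (xs ys : 'I_m -> X) :
  (forall i j, (xs i < xs j) = (ys i < ys j)) ->
  exists g, is_aut g /\ forall i, g (xs i) = ys i.
Proof.
move=> xys_lt.
have [N [zs [zs_lt zs_onto zs_from]]] := increasing_enumeration x0 xs.
have [idx idxP] := fin_all_exists zs_onto.
have [rep repP] := fin_all_exists zs_from.
have ys_eq i j : xs i = xs j -> ys i = ys j.
  by move=> xij; apply/eqP; rewrite eq_le !leNgt -!xys_lt xij ltxx.
have ys_rep_lt (k l : 'I_N) : (k < l)%N -> ys (rep k) < ys (rep l).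
  by move=> kl; rewrite -xys_lt !repP zs_lt.
have [g [g_aut g_zs]] := X_uh zs_lt ys_rep_lt.
by exists g; split=> // i; rewrite -idxP g_zs; apply: ys_eq; rewrite repP idxP.
Qed.

Definition relative_position n (pts : 'I_n -> X) g : {ffun 'I_n * 'I_n -> bool * bool} :=
  [ffun ij => (g (pts ij.1) < pts ij.2, pts ij.2 < g (pts ij.1))].

Lemma same_position_double_coset (x0 : X) n (pts : 'I_n -> X) f g :
    is_aut f -> is_aut g -> relative_position pts f = relative_position pts g ->
  exists u, [/\ is_aut u, forall i, u (pts i) = pts i & forall i, u (f (pts i)) = g (pts i)].
Proof.
move=> f_aut g_aut same_pos.
have pos_lt i j : (f (pts i) < pts j) = (g (pts i) < pts j).
  by have := congr1 (fun t : {ffun _ -> _} => (t (i, j)).1) same_pos; rewrite !ffunE.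
have pos_gt i j : (pts j < f (pts i)) = (pts j < g (pts i)).
  by have := congr1 (fun t : {ffun _ -> _} => (t (i, j)).2) same_pos; rewrite !ffunE.
pose with_image h a := match split a with inl i => pts i | inr i => h (pts i) end.
have same_order a b : (with_image f a < with_image f b) = (with_image g a < with_image g b).
  rewrite /with_image.
  by case: (split a) => i; case: (split b) => j; rewrite ?pos_lt ?pos_gt ?aut_lt_mono.
have [u [u_aut u_tuple]] := ultrahomogeneous_tuple x0 same_order.
exists u; split=> // i.
- by have := u_tuple (unsplit (inl i)); rewrite /with_image unsplitK.
- by have := u_tuple (unsplit (inr i)); rewrite /with_image unsplitK.
Qed.

Lemma ultrahomogeneous_roelcke_precompact (x0 : X) :
  roelcke_precompact (@tau_partial_nbhd d X).
Proof.
move=> U [n [pts U_stab]].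
have [F [F_aut F_pos]] := fin_image_section (relative_position pts) (@aut_id _ X).
exists #|{ffun 'I_n * 'I_n -> bool * bool}|, (fun k => F (enum_val k)).
split=> [k | g g_aut]; first exact: F_aut.
pose f := F (relative_position pts g); have f_aut : is_aut f := F_aut _.
have [u [u_aut u_fix u_fg]] := same_position_double_coset x0 f_aut g_aut (F_pos g g_aut).
have [u' [u'_aut uK u'K]] := aut_inv u_aut.
have [f' [f'_aut fK f'K]] := aut_inv f_aut.
have v_aut : is_aut (f' \o u' \o g) by apply: aut_comp => //; apply: aut_comp.
exists (enum_rank (relative_position pts g)), u, (f' \o u' \o g); rewrite enum_rankK -/f.
split=> //; split=> //; split; first exact: U_stab.
split; first by apply: U_stab => // i /=; rewrite -u_fg uK fK.
by move=> z /=; rewrite f'K u'K.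
Qed.

End Ultrahomogeneous.

Theorem theorem3p3 (d : Order.disp_t) (X : orderType d) :
  (exists x y : X, x <> y) ->
  simple_chain X ->
  (rigid X ->
     ~ roelcke_precompact (@tau_p_nbhd d X) /\
     ~ roelcke_precompact (@tau_partial_nbhd d X)) /\
  (ultrahomogeneous X ->
     roelcke_precompact (@tau_partial_nbhd d X) /\
     roelcke_precompact (@tau_p_nbhd d X)).
Proof.
move=> two_points _; have [x0 _] := two_points; split=> [X_rigid | X_uh].
- have not_rp_p := rigid_not_roelcke_precompact X_rigid two_points.
  by split=> // /roelcke_precompact_tau_p.
- have rp_partial := ultrahomogeneous_roelcke_precompact X_uh x0.
  by split=> //; apply: roelcke_precompact_tau_p.
Qed.
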